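(* Let $p,l$ be distinct odd primes and let $\Gamma=\psi(\tilde\Gamma)$ be the group described in the context. Then $\Gamma$ is commutative transitive: for all $a,b,c\in\Gamma\setminus\{1\}$, if $a$ commutes with $b$ and $b$ commutes with $c$, then $a$ commutes with $c$.
   Context: Let $p,l$ be distinct odd primes. Let $\mathbb H(\mathbb Z)$ be the ring of quaternions $x=x_0+x_1i+x_2j+x_3k$ with $x_0,\dots,x_3\in\mathbb Z$, where $i^2=j^2=k^2=-1$, $ij=-ji=k$; write $|x|^2=x_0^2+x_1^2+x_2^2+x_3^2$. Fix $c_p,d_p\in\mathbb Q_p$ with $c_p^2+d_p^2+1=0$ and $c_l,d_l\in\mathbb Q_l$ with $c_l^2+d_l^2+1=0$. Define $\psi:\mathbb H(\mathbb Z)\setminus\{0\}\to G:=PGL_2(\mathbb Q_p)\times PGL_2(\mathbb Q_l)$ by sending $x$ to the class of the pair $\left(\begin{pmatrix} x_0+x_1c_p+x_3d_p & -x_1d_p+x_2+x_3c_p\\ -x_1d_p-x_2+x_3c_p & x_0-x_1c_p-x_3d_p\end{pmatrix},\begin{pmatrix} x_0+x_1c_l+x_3d_l & -x_1d_l+x_2+x_3c_l\\ -x_1d_l-x_2+x_3c_l & x_0-x_1c_l-x_3d_l\end{pmatrix}\right)$. Let $\tilde\Gamma$ be the set of $x\in\mathbb H(\mathbb Z)$ such that $|x|^2=p^rl^s$ for some integers $r,s\ge 0$, and such that $x_0$ is odd and $x_1,x_2,x_3$ are even if $|x|^2\equiv 1\pmod 4$, while $x_1$ is even and $x_0,x_2,x_3$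 are odd if $|x|^2\equiv 3\pmod 4$. Then $\Gamma=\psi(\tilde\Gamma)$ is a torsion-free cocompact lattice in $G$. *)

From HB Require Import structures.
From mathcomp Require Import all_boot all_order all_algebra.
Set Implicit Arguments. Unset Strict Implicit. Unset Printing Implicit Defensive.
Import Order.TTheory GRing.Theory Num.Theory.
Local Open Scope ring_scope.

(* Integer quaternions x = x0 + x1 i + x2 j + x3 k, as 4-tuples of integers. *)
Definition quat := (int * int * int * int)%type.
Definition q0 (x : quat) : int := x.1.1.1.
Definition q1 (x : quat) : int := x.1.1.2.
Definition q2 (x : quat) : int := x.1.2.
Definition q3 (x : quat) : int := x.2.

Definition qnorm2 (x : quat) : int :=
  q0 x ^+ 2 + q1 x ^+ 2 + q2 x ^+ 2 + q3 x ^+ 2.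

Definition zodd (z : int) : bool := ~~ (2 %| z)%Z.

Definition in_Gamma_tilde (p l : nat) (x : quat) : Prop :=
  (exists r s : nat, qnorm2 x = ((p ^ r * l ^ s)%N)%:Z) /\
  ((qnorm2 x %% 4)%Z = 1 ->
     [/\ zodd (q0 x), ~~ zodd (q1 x), ~~ zodd (q2 x) & ~~ zodd (q3 x)]) /\
  ((qnorm2 x %% 4)%Z = 3 ->
     [/\ ~~ zodd (q1 x), zodd (q0 x), zodd (q2 x) & zodd (q3 x)]).

Definition mx2 (K : nzRingType) (a b c d : K) : 'M[K]_2 :=
  \matrix_(i < 2, j < 2)
     (if i == 0 :> nat then (if j == 0 :> nat then a else b)
      else (if j == 0 :> nat then c else d)).

(* One component of psi, with parameters c, d satisfying c^2 + d^2 + 1 = 0 *)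
Definition psi_mx (K : fieldType) (c d : K) (x : quat) : 'M[K]_2 :=
  let x0 := (q0 x)%:~R in let x1 := (q1 x)%:~R in
  let x2 := (q2 x)%:~R in let x3 := (q3 x)%:~R in
  mx2 (x0 + x1 * c + x3 * d) (- (x1 * d) + x2 + x3 * c)
      (- (x1 * d) - x2 + x3 * c) (x0 - x1 * c - x3 * d).

(* Equality of classes in PGL_2(K): A = lambda B for a nonzero scalar lambda *)
Definition pgl_eq (K : fieldType) (A B : 'M[K]_2) : Prop :=
  exists2 lam : K, lam != 0 & A = lam *: B.

(* psi(x) = 1 in G = PGL_2(K1) x PGL_2(K2) *)
Definition psi_is_one (K1 K2 : fieldType) (c1 d1 : K1) (c2 d2 : K2) (x : quat) : Prop :=
  pgl_eq (psi_mx c1 d1 x) 1%:M /\ pgl_eq (psi_mx c2 d2 x) 1%:M.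

Definition psi_commute (K1 K2 : fieldType) (c1 d1 : K1) (c2 d2 : K2) (x y : quat) : Prop :=
  pgl_eq (psi_mx c1 d1 x *m psi_mx c1 d1 y) (psi_mx c1 d1 y *m psi_mx c1 d1 x) /\
  pgl_eq (psi_mx c2 d2 x *m psi_mx c2 d2 y) (psi_mx c2 d2 y *m psi_mx c2 d2 x).

From mathcomp Require Import all_boot all_order all_algebra.
From mathcomp Require Import ring zify.
Import GRing.Theory.
Local Open Scope ring_scope.
Set Implicit Arguments. Unset Strict Implicit.

(* For c^2 + d^2 = -1, [qrep c d] is an injective algebra morphism from the
   quaternions over K to 2x2 matrices, so psi(a) psi(b) = lam psi(b) psi(a)
   in PGL_2(K) forces ab = lam ba.  Taking norms gives lam = 1 or -1.  If
   lam = -1 then Re(b) |a|^2 = 0, impossible since elements of Gamma~ have odd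
   real part and odd norm; if lam = 1, the imaginary parts of a and b are
   proportional.  Proportionality to a nonzero vector is transitive, and the
   imaginary part of b is nonzero because psi(b) <> 1. *)

Record hquat (R : Type) := HQuat { h0 : R; h1 : R; h2 : R; h3 : R }.

Section HamiltonProduct.
Variable R : comNzRingType.
Implicit Types (x y : hquat R) (k : R).

Definition hmul x y : hquat R :=
  HQuat (h0 x * h0 y - h1 x * h1 y - h2 x * h2 y - h3 x * h3 y)
        (h0 x * h1 y + h1 x * h0 y + h2 x * h3 y - h3 x * h2 y)
        (h0 x * h2 y - h1 x * h3 y + h2 x * h0 y + h3 x * h1 y)
        (h0 x * h3 y + h1 x * h2 y - h2 x * h1 y + h3 x * h0 y).

Definition hscale k x : hquat R := HQuat (k * h0 x) (k * h1 x) (k * h2 x) (k * h3 x).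

Definition hnorm x : R := h0 x ^+ 2 + h1 x ^+ 2 + h2 x ^+ 2 + h3 x ^+ 2.

Definition hvec x (i : 'I_3) : R :=
  match val i with 0 => h1 x | 1 => h2 x | _ => h3 x end.

(* The vector parts are proportional: their cross product vanishes. *)
Definition hpar x y : Prop := forall i j, hvec x i * hvec y j = hvec x j * hvec y i.

Lemma hscale1 x : hscale 1 x = x.
Proof. by case: x => *; rewrite /hscale /= !mul1r. Qed.

Lemma hnormZ k x : hnorm (hscale k x) = k ^+ 2 * hnorm x.
Proof. by case: x => *; rewrite /hnorm /=; ring. Qed.

Lemma hnormM x y : hnorm (hmul x y) = hnorm x * hnorm y.
Proof. by case: x y => [? ? ? ?] [? ? ? ?]; rewrite /hnorm /=; ring. Qed.

Lemma hpar_hmulC x y : hpar x y -> hmul x y = hmul y x.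
Proof.
case: x y => [x0 x1 x2 x3] [y0 y1 y2 y3] xy.
have e12 := xy 0 1; have e13 := xy 0 2; have e23 := xy 1 2.
rewrite /hvec /= in e12 e13 e23.
rewrite /hmul /=; congr HQuat; first ring.
- by rewrite [y3 * x2]mulrC e23; ring.
- by rewrite [y3 * x1]mulrC e13; ring.
- by rewrite [y2 * x1]mulrC e12; ring.
Qed.

End HamiltonProduct.

Lemma hpar_trans (R : idomainType) (x y z : hquat R) k :
  hvec y k != 0 -> hpar x y -> hpar y z -> hpar x z.
Proof.
move=> yk0 xy yz i j; apply/eqP; rewrite -subr_eq0.
have yk2_xz i' j' : hvec y k ^+ 2 * (hvec x i' * hvec z j') =
    hvec x k * hvec z k * (hvec y i' * hvec y j').
  transitivity ((hvec x i' * hvec y k) * (hvec y k * hvec z j')); first ring.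
  by rewrite xy yz; ring.
have : hvec y k ^+ 2 * (hvec x i * hvec z j - hvec x j * hvec z i) = 0.
  by rewrite mulrBr !yk2_xz [hvec y j * _]mulrC subrr.
by move/eqP; rewrite mulf_eq0 expf_eq0 (negbTE yk0) andbF.
Qed.

Section FieldQuaternions.
Variable K : fieldType.
Hypothesis two_neq0 : (2 : K) != 0.
Implicit Types (x y : hquat K) (k : K).

Let eq_of_double_diff (u v a b : K) : a = b -> a - b = 2 * (u - v) -> u = v.
Proof.
by move=> -> /esym/eqP; rewrite subrr mulf_eq0 (negbTE two_neq0) subr_eq0 => /eqP.
Qed.

Lemma hmulC_hpar x y : hmul x y = hmul y x -> hpar x y.
Proof.
case: x y => [x0 x1 x2 x3] [y0 y1 y2 y3]; rewrite /hmul => -[_ e1 e2 e3].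
have e23 : x2 * y3 = x3 * y2 by apply: (eq_of_double_diff e1); ring.
have e13 : x1 * y3 = x3 * y1 by apply: (eq_of_double_diff (esym e2)); ring.
have e12 : x1 * y2 = x2 * y1 by apply: (eq_of_double_diff e3); ring.
by move=> [[|[|[|//]]] ?] [[|[|[|//]]] ?]; rewrite /hvec /= ?e12 ?e13 ?e23.
Qed.

Lemma hmul_anticomm x y : hmul x y = hscale (-1) (hmul y x) -> h0 y * hnorm x = 0.
Proof.
move=> xy; apply: (mulfI two_neq0); rewrite mulr0.
have -> : 2 * (h0 y * hnorm x) =
    h0 x * (h0 (hmul x y) + h0 (hmul y x)) + h1 x * (h1 (hmul x y) + h1 (hmul y x))
  + h2 x * (h2 (hmul x y) + h2 (hmul y x)) + h3 x * (h3 (hmul x y) + h3 (hmul y x)).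
  by case: x y {xy} => [? ? ? ?] [? ? ? ?]; rewrite /hnorm /=; ring.
by rewrite xy /= !mulN1r !addNr !mulr0 !addr0.
Qed.

Lemma hmul_scale_hpar x y k : h0 y != 0 -> hnorm x != 0 -> hnorm y != 0 ->
  hmul x y = hscale k (hmul y x) -> hpar x y.
Proof.
move=> y0 Nx Ny xy.
have : k ^+ 2 * (hnorm x * hnorm y) = 1 * (hnorm x * hnorm y).
  by rewrite mul1r {1}[hnorm x * _]mulrC -!hnormM -hnormZ xy.
move/(mulIf (mulf_neq0 Nx Ny))/eqP; rewrite sqrf_eq1 => /orP[]/eqP k1.
  by apply: hmulC_hpar; rewrite xy k1 hscale1.
move: xy; rewrite k1 => /hmul_anticomm /eqP.
by rewrite mulf_eq0 (negbTE y0) (negbTE Nx).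
Qed.

End FieldQuaternions.

Lemma mx2_mul (R : nzRingType) (a b c d a' b' c' d' : R) :
  mx2 a b c d *m mx2 a' b' c' d' =
  mx2 (a * a' + b * c') (a * b' + b * d') (c * a' + d * c') (c * b' + d * d').
Proof.
apply/matrixP => i j; rewrite !mxE !big_ord_recl big_ord0 !mxE /=.
by case: (i == 0 :> nat); case: (j == 0 :> nat); rewrite addr0.
Qed.

Lemma mx2_scale (R : nzRingType) (k a b c d : R) :
  k *: mx2 a b c d = mx2 (k * a) (k * b) (k * c) (k * d).
Proof.
by apply/matrixP => i j; rewrite !mxE; case: (i == 0 :> nat); case: (j == 0 :> nat).
Qed.

Lemma mx2_1 (R : nzRingType) : 1%:M = mx2 (1 : R) 0 0 1.
Proof.
by apply/matrixP => -[[|[|//]] ?] [[|[|//]] ?]; rewrite !mxE.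
Qed.

Section QuaternionRepresentation.
Variables (K : fieldType) (c d : K).
Hypothesis cd : c ^+ 2 + d ^+ 2 + 1 = 0.
Implicit Types (x y : hquat K) (k : K).

(* i, j, k are sent to matrices I, J, K' with I^2 = J^2 = K'^2 = -1 and IJ = K'. *)
Definition qrep x : 'M[K]_2 :=
  mx2 (h0 x + h1 x * c + h3 x * d) (- (h1 x * d) + h2 x + h3 x * c)
      (- (h1 x * d) - h2 x + h3 x * c) (h0 x - h1 x * c - h3 x * d).

Definition qunrep (A : 'M[K]_2) : hquat K :=
  let u := (A 0 0 - A 1 1) / 2 in let v := (A 0 1 + A 1 0) / 2 in
  HQuat ((A 0 0 + A 1 1) / 2) (d * v - c * u) ((A 0 1 - A 1 0) / 2) (- (d * u + c * v)).

Let eq_mod_cd (a b g : K) : a = b + g * (c ^+ 2 + d ^+ 2 + 1) -> a = b.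
Proof. by rewrite cd mulr0 addr0. Qed.

Lemma qrepK : (2 : K) != 0 -> cancel qrep qunrep.
Proof.
move=> two_neq0 [x0 x1 x2 x3]; rewrite /qunrep !mxE /=; congr HQuat.
- by field.
- by apply: (eq_mod_cd (g := - x1)); field.
- by field.
- by apply: (eq_mod_cd (g := - x3)); field.
Qed.

Lemma qrep_inj : (2 : K) != 0 -> injective qrep.
Proof. by move=> two_neq0; apply: can_inj (qrepK two_neq0). Qed.

Lemma qrepZ k x : k *: qrep x = qrep (hscale k x).
Proof. by rewrite mx2_scale; congr mx2; rewrite /=; ring. Qed.

Lemma qrepM x y : qrep (hmul x y) = qrep x *m qrep y.
Proof.
case: x y => [x0 x1 x2 x3] [y0 y1 y2 y3]; rewrite /qrep mx2_mul /=; congr mx2.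
- by apply: (eq_mod_cd (g := - (x1 * y1 + x3 * y3))); ring.
- by apply: (eq_mod_cd (g := x3 * y1 - x1 * y3)); ring.
- by apply: (eq_mod_cd (g := x1 * y3 - x3 * y1)); ring.
- by apply: (eq_mod_cd (g := - (x1 * y1 + x3 * y3))); ring.
Qed.

End QuaternionRepresentation.

Definition qembed (R : nzRingType) (x : quat) : hquat R :=
  HQuat (q0 x)%:~R (q1 x)%:~R (q2 x)%:~R (q3 x)%:~R.

Lemma hnorm_qembed (R : comNzRingType) (x : quat) : hnorm (qembed R x) = (qnorm2 x)%:~R.
Proof. by rewrite /hnorm /qnorm2 /= !intrD !expr2 !intrM. Qed.

Lemma pchar0_intr_eq0 (R : idomainType) (z : int) :
  [pchar R] =i pred0 -> (z%:~R == 0 :> R) = (z == 0).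
Proof.
move=> /pcharf0P R0; case: z => n; first by rewrite -pmulrn R0.
by rewrite NegzE intrN oppr_eq0 -pmulrn R0.
Qed.

Definition pgl_commute (K : fieldType) (A B : 'M[K]_2) : Prop := pgl_eq (A *m B) (B *m A).

Section PsiComponent.
Variables (K : fieldType) (c d : K).
Hypotheses (K0 : [pchar K] =i pred0) (cd : c ^+ 2 + d ^+ 2 + 1 = 0).

Let two_neq0 : (2 : K) != 0. Proof. by move/pcharf0P: K0 => ->. Qed.

Lemma psi_mx_qrep (x : quat) : psi_mx c d x = qrep c d (qembed K x).
Proof. by []. Qed.

Lemma psi_pgl_one (x : quat) : q1 x = 0 -> q2 x = 0 -> q3 x = 0 -> q0 x != 0 ->
  pgl_eq (psi_mx c d x) 1%:M.
Proof.
move=> x1 x2 x3 x0; exists (q0 x)%:~R; first by rewrite pchar0_intr_eq0.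
by rewrite mx2_1 mx2_scale /psi_mx x1 x2 x3; congr mx2; ring.
Qed.

Lemma psi_pgl_commute_hpar (a b : quat) : q0 b != 0 -> qnorm2 a != 0 -> qnorm2 b != 0 ->
  pgl_commute (psi_mx c d a) (psi_mx c d b) -> hpar (qembed K a) (qembed K b).
Proof.
move=> b0 Na Nb [k _]; rewrite !psi_mx_qrep -!qrepM // qrepZ => /(qrep_inj cd two_neq0).
by apply: (hmul_scale_hpar two_neq0); rewrite ?hnorm_qembed /= pchar0_intr_eq0.
Qed.

Lemma hpar_psi_pgl_commute (a b : quat) :
  hpar (qembed K a) (qembed K b) -> pgl_commute (psi_mx c d a) (psi_mx c d b).
Proof.
move=> ab; exists 1; first exact: oner_neq0.
by rewrite scale1r !psi_mx_qrep -!qrepM // hpar_hmulC.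
Qed.

Lemma psi_pgl_commute_trans (a b e : quat) :
  pgl_commute (psi_mx c d a) (psi_mx c d b) -> pgl_commute (psi_mx c d b) (psi_mx c d e) ->
  q0 b != 0 -> q0 e != 0 -> qnorm2 a != 0 -> qnorm2 b != 0 -> qnorm2 e != 0 ->
  [|| q1 b != 0, q2 b != 0 | q3 b != 0] ->
  pgl_commute (psi_mx c d a) (psi_mx c d e).
Proof.
move=> ab be b0 e0 Na Nb Ne bvec.
have [k bk] : exists k, hvec (qembed K b) k != 0.
  by case/or3P: bvec; [exists 0 | exists 1 | exists 2]; rewrite /= pchar0_intr_eq0.
apply: hpar_psi_pgl_commute; apply: (hpar_trans bk); exact: psi_pgl_commute_hpar.
Qed.

End PsiComponent.

Lemma in_Gamma_tilde_odd_norm (p l : nat) (x : quat) : odd p -> odd l ->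
  in_Gamma_tilde p l x -> exists2 n : nat, qnorm2 x = n%:Z & odd n.
Proof.
by move=> op ol [[r [s ->]] _]; exists (p ^ r * l ^ s)%N; rewrite // oddM !oddX op ol !orbT.
Qed.

Lemma in_Gamma_tilde_qnorm2_neq0 (p l : nat) (x : quat) : odd p -> odd l ->
  in_Gamma_tilde p l x -> qnorm2 x != 0.
Proof. by move=> op ol /(in_Gamma_tilde_odd_norm op ol) [[|n] ->]. Qed.

Lemma in_Gamma_tilde_q0_neq0 (p l : nat) (x : quat) : odd p -> odd l ->
  in_Gamma_tilde p l x -> q0 x != 0.
Proof.
move=> op ol Gx; have [n Nx on] := in_Gamma_tilde_odd_norm op ol Gx.
have [_ [mod1 mod3]] := Gx; rewrite Nx modz_nat in mod1 mod3.
have odd_q0 : zodd (q0 x).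
  have [e|e] : (n %% 4 = 1 \/ n %% 4 = 3)%N by lia.
  - by have [] := mod1 (congr1 Posz e).
  - by have [] := mod3 (congr1 Posz e).
by apply: contraTneq odd_q0 => ->.
Qed.

Theorem proposition2p2 (p l : nat) (Kp Kl : fieldType)
    (cp dp : Kp) (cl dl : Kl) :
  prime p -> prime l -> odd p -> odd l -> p != l ->
  [pchar Kp] =i pred0 -> [pchar Kl] =i pred0 ->
  cp ^+ 2 + dp ^+ 2 + 1 = 0 -> cl ^+ 2 + dl ^+ 2 + 1 = 0 ->
  forall a b c : quat,
    in_Gamma_tilde p l a -> in_Gamma_tilde p l b -> in_Gamma_tilde p l c ->
    ~ psi_is_one cp dp cl dl a -> ~ psi_is_one cp dp cl dl b ->
    ~ psi_is_one cp dp cl dl c ->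
    psi_commute cp dp cl dl a b -> psi_commute cp dp cl dl b c ->
    psi_commute cp dp cl dl a c.
Proof.
move=> _ _ op ol _ Kp0 Kl0 cdp cdl a b c Ga Gb Gc _ b_neq1 _ [abp abl] [bcp bcl].
have q0_neq0 := in_Gamma_tilde_q0_neq0 op ol.
have qnorm2_neq0 := in_Gamma_tilde_qnorm2_neq0 op ol.
have bvec : [|| q1 b != 0, q2 b != 0 | q3 b != 0].
  apply: contraT; rewrite !negb_or !negbK => /and3P[/eqP b1 /eqP b2 /eqP b3].
  by case: b_neq1; split; apply: psi_pgl_one => //; exact: q0_neq0 Gb.
split; [apply: (psi_pgl_commute_trans Kp0 cdp abp bcp) |
        apply: (psi_pgl_commute_trans Kl0 cdl abl bcl)];
  by [ | exact: q0_neq0 | exact: qnorm2_neq0].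
Qed.
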